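(* Let $\mathfrak{P}$ be a compactness-like topological property, let $X$ be a space, let $Y$ be an extension of $X$ with compact remainder, let $\zeta Y$ be a compactification of $Y$, and let $\phi:\beta X\to\zeta Y$ be the continuous extension of the identity of $X$. Then $Y\in\mathscr{E}_\mathfrak{P}(X)$ if and only if $X$ is locally-$\mathfrak{P}$ and $\beta X\setminus\lambda_\mathfrak{P}X\subseteq\phi^{-1}[Y\setminus X]$.
   Context: All spaces are completely regular Hausdorff; $\beta X$ is the Stone–Čech compactification. An extension of $X$ is a space containing $X$ as a dense subspace; its remainder is $Y\setminus X$. $\mathscr{E}_\mathfrak{P}(X)$ is the set of all extensions of $X$ with $\mathfrak{P}$ and compact remainder. $X$ is locally-$\mathfrak{P}$ if each point has an open neighborhood whose closure has $\mathfrak{P}$. $\mathrm{Coz}(X)$ is the set of cozero-sets of $X$. $\lambda_\mathfrak{P}X=\bigcup\{\mathrm{int}_{\beta X}\mathrm{cl}_{\beta X}C: C\in\mathrm{Coz}(X),\ \mathrm{cl}_XC\text{ has }\mathfrak{P}\}$. A topological property is compactness-like if it is hereditary to clopen subspaces, finitely additive (finite disjoint unions of closed subspaces with $\mathfrak{P}$ have $\mathfrak{P}$), invariant and inverse invariant under perfect surjections (closed continuous surjections with compact fibers), and satisfies Mrówka's condition (W): if a space $Z$ has a point $p$ with an open base $\mathscr{B}$ at $p$ such that $Z\setminus B$ has $\mathfrak{P}$ for all $B\in\mathscr{B}$, then $Z$ has $\mathfrak{P}$. *)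

From Stdlib Require Import Reals List.
Open Scope R_scope.

Definition set (T : Type) := T -> Prop.

Record space := Space {
  carrier :> Type;
  open : set carrier -> Prop;
  open_setT : open (fun _ => True);
  open_setI : forall U V, open U -> open V -> open (fun x => U x /\ V x);
  open_bigU : forall F : set (set carrier),
      (forall U, F U -> open U) -> open (fun x => exists U, F U /\ U x)
}.
Arguments open {s} _.

Section Subspace.
Variables (S : space) (A : set S).
Definition sub_open (U : set {x : S | A x}) : Prop :=
  exists V : set S, open V /\ forall x, U x <-> V (proj1_sig x).

Lemma sub_open_setT : sub_open (fun _ => True).
Proof. exists (fun _ => True); split; [apply open_setT | tauto]. Qed.

Lemma sub_open_setI U V : sub_open U -> sub_open V -> sub_open (fun x => U x /\ V x).
Proof.
  intros [U' [HU HU']] [V' [HV HV']]. exists (fun x => U' x /\ V' x).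
  split; [apply open_setI; auto|]. intros x; rewrite HU', HV'; tauto.
Qed.

Lemma sub_open_bigU (F : set (set {x : S | A x})) :
  (forall U, F U -> sub_open U) -> sub_open (fun x => exists U, F U /\ U x).
Proof.
  intros HF.
  exists (fun y => exists V, (open V /\ exists U, F U /\ forall x, U x <-> V (proj1_sig x)) /\ V y).
  split.
  - apply open_bigU. intros V [HV _]; exact HV.
  - intros x; split.
    + intros [U [FU Ux]]. destruct (HF U FU) as [V [HV HUV]].
      exists V; split; [split; [exact HV| exists U; auto] | apply HUV; exact Ux].
    + intros [V [[HV [U [FU HUV]]] Vx]]. exists U; split; [exact FU | apply HUV; exact Vx].
Qed.

Definition subspace : space :=
  Space {x : S | A x} sub_open sub_open_setT sub_open_setI sub_open_bigU.
End Subspace.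

Section Notions.
Definition complement {T} (A : set T) : set T := fun x => ~ A x.
Definition image {S T : Type} (f : S -> T) (A : set S) : set T :=
  fun y => exists x, A x /\ f x = y.

Definition closed {S : space} (C : set S) : Prop := open (complement C).
Definition closure {S : space} (A : set S) : set S :=
  fun x => forall C, closed C -> (forall y, A y -> C y) -> C x.
Definition interior {S : space} (A : set S) : set S :=
  fun x => exists U, open U /\ U x /\ forall y, U y -> A y.
Definition dense {S : space} (A : set S) : Prop := forall x, closure A x.

Definition continuous {S T : space} (f : S -> T) : Prop :=
  forall U : set T, open U -> open (fun x => U (f x)).

Definition R_open (U : R -> Prop) : Prop :=
  forall x, U x -> exists e, 0 < e /\ forall y, Rabs (y - x) < e -> U y.
Definition continuous_R {S : space} (f : S -> R) : Prop :=
  forall U, R_open U -> open (fun x => U (f x)).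

Definition compact (S : space) : Prop :=
  forall F : set (set S), (forall U, F U -> open U) ->
    (forall x, exists U, F U /\ U x) ->
    exists l : list (set S), (forall U, In U l -> F U) /\
      (forall x, exists U, In U l /\ U x).

Definition hausdorff (S : space) : Prop :=
  forall x y : S, x <> y -> exists U V, open U /\ open V /\ U x /\ V y /\
    forall z, ~ (U z /\ V z).

Definition completely_regular (S : space) : Prop :=
  forall (C : set S) (x : S), closed C -> ~ C x ->
    exists f : S -> R, continuous_R f /\ f x = 0 /\
      (forall y, C y -> f y = 1) /\ (forall y, 0 <= f y <= 1).

(* "space" in the paper = completely regular Hausdorff space *)
Definition tychonoff (S : space) : Prop := hausdorff S /\ completely_regular S.

Definition embedding {S T : space} (f : S -> T) : Prop :=
  (forall x y, f x = f y -> x = y) /\ continuous f /\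
  (forall U : set S, open U -> exists V : set T, open V /\ forall x, U x <-> V (f x)).

Definition compactification (Y Z : space) (j : Y -> Z) : Prop :=
  compact Z /\ hausdorff Z /\ embedding j /\ dense (image j (fun _ => True)).

Definition stone_cech (X bX : space) (i : X -> bX) : Prop :=
  compactification X bX i /\
  forall (K : space) (g : X -> K), compact K -> hausdorff K -> continuous g ->
    exists G : bX -> K, continuous G /\ forall x, G (i x) = g x.

Definition property := space -> Prop.

Definition perfect {S T : space} (f : S -> T) : Prop :=
  continuous f /\ (forall C : set S, closed C -> closed (image f C)) /\
  (forall y, exists x, f x = y) /\
  (forall y, compact (subspace S (fun x => f x = y))).

Definition compactness_like (P : property) : Prop :=
  (forall (S : space) (A : set S), tychonoff S -> open A -> closed A ->
      P S -> P (subspace S A)) /\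
  (forall (S : space) (n : nat) (F : nat -> set S), tychonoff S ->
      (forall k, (k < n)%nat -> closed (F k) /\ P (subspace S (F k))) ->
      (forall k l x, (k < n)%nat -> (l < n)%nat -> k <> l -> F k x -> F l x -> False) ->
      (forall x, exists k, (k < n)%nat /\ F k x) ->
      P S) /\
  (forall (S T : space) (f : S -> T), tychonoff S -> tychonoff T ->
      perfect f -> P S -> P T) /\
  (forall (S T : space) (f : S -> T), tychonoff S -> tychonoff T ->
      perfect f -> P T -> P S) /\
  (* Mrowka's condition (W) *)
  (forall (Z : space) (p : Z) (B : set (set Z)), tychonoff Z ->
      (forall U, B U -> open U /\ U p) ->
      (forall V, open V -> V p -> exists U, B U /\ forall z, U z -> V z) ->
      (forall U, B U -> P (subspace Z (complement U))) ->
      P Z).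

Definition locally (P : property) (X : space) : Prop :=
  forall x : X, exists U : set X, open U /\ U x /\ P (subspace X (closure U)).

Definition cozero {X : space} (C : set X) : Prop :=
  exists f : X -> R, continuous_R f /\ forall x, C x <-> f x <> 0.

(* lambda_P X, as a subset of bX, where i : X -> bX is the Stone-Cech embedding *)
Definition lambdaP (P : property) (X bX : space) (i : X -> bX) : set bX :=
  fun p => exists C : set X, cozero C /\ P (subspace X (closure C)) /\
    interior (closure (image i C)) p.

(* Y (containing X as the subset Xs) belongs to E_P(X):
   Y is an extension of X with P and compact remainder *)
Definition in_EP (P : property) (Y : space) (Xs : set Y) : Prop :=
  dense Xs /\ P Y /\ compact (subspace Y (complement Xs)).
End Notions.

(* If [Y] has P, take [g : Y -> [0,1]] vanishing on the compact remainder [K]: the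
   [X]-closure of [{g > 1/2}] is closed in [Y], so it has P.  Choosing [g = 1] at a point
   of [X] gives local P; choosing [g = 1] off a neighbourhood of [j[K]] missing [phi p]
   shows that [p] lies in lambda_P X whenever [phi p] is not in [j[K]].
   Conversely, for a closed [A] of [Y] inside [X], the compact set [cl_bX A] lies in
   lambda_P X, so [A] is covered by finitely many [cl_X C] with P and has P by finite
   additivity.  Collapsing [K] to a point gives a perfect image of [Y] in which the
   complements of the neighbourhoods of that point are such sets [A]; condition (W) and
   inverse invariance under perfect maps then give P for [Y].  This direction does not
   use local P of [X]. *)

From Stdlib Require Import Reals Lra Lia List Classical FunctionalExtensionality
  PropExtensionality ProofIrrelevance ClassicalEpsilon.
Open Scope R_scope.

Lemma set_ext {T} (A B : set T) : (forall x, A x <-> B x) -> A = B.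
Proof.
  intros H; apply functional_extensionality; intros x.
  apply propositional_extensionality; auto.
Qed.

Lemma sig_eq {T} (A : T -> Prop) (x y : {t | A t}) : proj1_sig x = proj1_sig y -> x = y.
Proof.
  destruct x as [x hx], y as [y hy]; simpl; intros ->.
  f_equal; apply proof_irrelevance.
Qed.

Section OpenSets.
Context {S : space}.

Lemma open_ext (A B : set S) : open A -> (forall x, A x <-> B x) -> open B.
Proof. intros HA H; rewrite <- (set_ext A B H); exact HA. Qed.

Lemma open_of_neighbourhoods (A : set S) :
  (forall x, A x -> exists U, open U /\ U x /\ forall y, U y -> A y) -> open A.
Proof.
  intros H.
  apply (open_ext (fun x => exists U, (fun U => open U /\ forall y, U y -> A y) U /\ U x)).
  - apply open_bigU; intros U [HU _]; exact HU.
  - intros x; split.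
    + intros [U [[_ HU] Ux]]; auto.
    + intros Ax; destruct (H x Ax) as [U [HU [Ux HUA]]]; exists U; auto.
Qed.

Lemma open_setU (U V : set S) : open U -> open V -> open (fun x => U x \/ V x).
Proof.
  intros HU HV; apply open_of_neighbourhoods; intros x [Ux|Vx];
    [exists U | exists V]; auto.
Qed.

Lemma open_set0 : open (fun _ : S => False).
Proof. apply open_of_neighbourhoods; intros x []. Qed.

Lemma closed_complement (U : set S) : open U -> closed (complement U).
Proof.
  intros HU; apply (open_ext U); auto.
  intros x; unfold complement; split; [tauto | apply NNPP].
Qed.

Lemma open_complement (A : set S) : closed (complement A) -> open A.
Proof.
  intros H; apply (open_ext _ _ H).
  intros x; unfold complement; split; [apply NNPP | tauto].
Qed.

Lemma closed_setT : closed (fun _ : S => True).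
Proof. apply (open_ext (fun _ => False)); [apply open_set0 | unfold complement; tauto]. Qed.

Lemma subset_closure (A : set S) x : A x -> closure A x.
Proof. intros Ax C _ HC; auto. Qed.

Lemma closure_closed (A : set S) : closed (closure A).
Proof.
  apply open_of_neighbourhoods; intros x Hx.
  apply not_all_ex_not in Hx as [C HC].
  apply imply_to_and in HC as [HCc HC].
  apply imply_to_and in HC as [HAC HCx].
  exists (complement C); repeat split; auto.
  intros y Cy Hy; apply Cy, Hy; auto.
Qed.

Lemma interior_open (A : set S) : open (interior A).
Proof.
  apply open_of_neighbourhoods; intros x [U [HU [Ux HUA]]].
  exists U; repeat split; auto; intros y Uy; exists U; auto.
Qed.

Lemma interior_subset (A : set S) x : interior A x -> A x.
Proof. intros [U [_ [Ux H]]]; auto. Qed.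
End OpenSets.

Lemma continuous_comp {S T W : space} (f : S -> T) (g : T -> W) :
  continuous f -> continuous g -> continuous (fun x => g (f x)).
Proof. intros Hf Hg U HU; apply (Hf _ (Hg _ HU)). Qed.

Lemma continuous_proj {S : space} (A : set S) :
  continuous (fun z : subspace S A => proj1_sig z).
Proof. intros U HU; exists U; split; [exact HU | tauto]. Qed.

Lemma continuous_into_subspace {S T : space} (A : set T) (f : S -> subspace T A) :
  continuous (fun x => proj1_sig (f x)) -> continuous f.
Proof.
  intros Hf U [V [HV HUV]].
  apply (open_ext (fun x => V (proj1_sig (f x)))); [apply Hf; exact HV|].
  intros x; rewrite HUV; tauto.
Qed.

Lemma closed_trace {T : space} (A B : set T) :
  closed B -> closed (fun z : subspace T A => B (proj1_sig z)).
Proof. intros HB; exact (continuous_proj A _ HB). Qed.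

Lemma closure_embedding {S T : space} (i : S -> T) (C : set S) (x : S) :
  embedding i -> closure (image i C) (i x) -> closure C x.
Proof.
  intros [_ [_ Hemb]] Hcl D HD HCD.
  destruct (Hemb (complement D) HD) as [V [HV HDV]].
  apply NNPP; intros nD.
  apply (Hcl (complement V)).
  - apply closed_complement; auto.
  - intros t [z [Cz <-]] Vz; apply HDV in Vz; apply Vz; auto.
  - apply HDV; auto.
Qed.

Lemma R_open_ball (a e : R) : R_open (fun y => Rabs (y - a) < e).
Proof.
  intros x Hx; exists (e - Rabs (x - a)); split; [lra|].
  intros y Hy.
  assert (Rabs (y - a) <= Rabs (y - x) + Rabs (x - a)).
  { replace (y - a) with ((y - x) + (x - a)) by ring; apply Rabs_triang. }
  lra.
Qed.

Lemma R_open_lt (c : R) : R_open (fun y => y < c).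
Proof.
  intros x Hx; exists (c - x); split; [lra|].
  intros y Hy; apply Rabs_def2 in Hy; lra.
Qed.

Lemma R_open_gt (c : R) : R_open (fun y => c < y).
Proof.
  intros x Hx; exists (x - c); split; [lra|].
  intros y Hy; apply Rabs_def2 in Hy; lra.
Qed.

Section RealFunctions.
Context {S : space}.

Lemma continuous_R_comp {T : space} (f : S -> T) (g : T -> R) :
  continuous f -> continuous_R g -> continuous_R (fun x => g (f x)).
Proof. intros Hf Hg U HU; apply (Hf (fun y => U (g y))), Hg, HU. Qed.

Lemma continuous_R_const (c : R) : continuous_R (fun _ : S => c).
Proof.
  intros U HU; apply open_of_neighbourhoods; intros x Ux.
  exists (fun _ => True); split; [apply open_setT | auto].
Qed.

Lemma continuous_R_binop (f g : S -> R) (h : R -> R -> R) :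
  continuous_R f -> continuous_R g ->
  (forall a b e, 0 < e -> exists d, 0 < d /\ forall a' b',
      Rabs (a' - a) < d -> Rabs (b' - b) < d -> Rabs (h a' b' - h a b) < e) ->
  continuous_R (fun x => h (f x) (g x)).
Proof.
  intros Hf Hg Hh U HU; apply open_of_neighbourhoods; intros x Ux.
  destruct (HU _ Ux) as [e [He HeU]].
  destruct (Hh (f x) (g x) e He) as [d [Hd Hdd]].
  exists (fun z => Rabs (f z - f x) < d /\ Rabs (g z - g x) < d); repeat split.
  - apply open_setI;
      [apply (Hf (fun y => Rabs (y - f x) < d)) | apply (Hg (fun y => Rabs (y - g x) < d))];
      apply R_open_ball.
  - unfold Rminus; rewrite Rplus_opp_r, Rabs_R0; auto.
  - unfold Rminus; rewrite Rplus_opp_r, Rabs_R0; auto.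
  - intros y [H1 H2]; apply HeU, Hdd; auto.
Qed.

Lemma continuous_R_min (f g : S -> R) :
  continuous_R f -> continuous_R g -> continuous_R (fun x => Rmin (f x) (g x)).
Proof.
  intros Hf Hg; apply continuous_R_binop; auto.
  intros a b e He; exists e; split; auto; intros a' b' H1 H2.
  apply Rabs_def2 in H1; apply Rabs_def2 in H2; apply Rabs_def1;
    unfold Rmin; destruct (Rle_dec a' b'), (Rle_dec a b); lra.
Qed.

Lemma continuous_R_max (f g : S -> R) :
  continuous_R f -> continuous_R g -> continuous_R (fun x => Rmax (f x) (g x)).
Proof.
  intros Hf Hg; apply continuous_R_binop; auto.
  intros a b e He; exists e; split; auto; intros a' b' H1 H2.
  apply Rabs_def2 in H1; apply Rabs_def2 in H2; apply Rabs_def1;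
    unfold Rmax; destruct (Rle_dec a' b'), (Rle_dec a b); lra.
Qed.

Lemma continuous_R_affine (f : S -> R) (a b : R) :
  continuous_R f -> continuous_R (fun x => a * f x + b).
Proof.
  intros Hf; apply (continuous_R_binop f f (fun u _ => a * u + b)); auto.
  intros u v e He; exists (e / (Rabs a + 1)).
  pose proof (Rabs_pos a); split; [apply Rdiv_lt_0_compat; lra|].
  intros u' v' H1 _.
  replace (a * u' + b - (a * u + b)) with (a * (u' - u)) by ring.
  rewrite Rabs_mult; pose proof (Rabs_pos (u' - u)).
  apply Rle_lt_trans with ((Rabs a + 1) * Rabs (u' - u)); [nra|].
  apply Rlt_le_trans with ((Rabs a + 1) * (e / (Rabs a + 1))).
  - apply Rmult_lt_compat_l; lra.
  - right; field; lra.
Qed.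

Lemma open_preimage_lt (f : S -> R) c : continuous_R f -> open (fun x => f x < c).
Proof. intros Hf; apply (Hf (fun y => y < c)), R_open_lt. Qed.

Lemma open_preimage_gt (f : S -> R) c : continuous_R f -> open (fun x => c < f x).
Proof. intros Hf; apply (Hf (fun y => c < y)), R_open_gt. Qed.

Lemma closed_preimage_ge (f : S -> R) c : continuous_R f -> closed (fun x => c <= f x).
Proof.
  intros Hf; apply (open_ext (fun x => f x < c)); [apply open_preimage_lt; auto|].
  intros x; unfold complement; lra.
Qed.
End RealFunctions.

Lemma subspace_tychonoff {S : space} (A : set S) : tychonoff S -> tychonoff (subspace S A).
Proof.
  intros [HH HCR]; split.
  - intros x y Hxy.
    assert (Hne : proj1_sig x <> proj1_sig y) by (intros E; apply Hxy, sig_eq, E).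
    destruct (HH _ _ Hne) as [U [V [HU [HV [Ux [Vy HUV]]]]]].
    exists (fun z : subspace S A => U (proj1_sig z)), (fun z : subspace S A => V (proj1_sig z)).
    repeat split; auto; [apply (continuous_proj A U HU) | apply (continuous_proj A V HV)].
  - intros C x [V [HV HVC]] Cx.
    destruct (HCR (complement V) (proj1_sig x)) as [f [Hf [Hfx [Hf1 Hf01]]]].
    + apply closed_complement; auto.
    + intros N; apply N, HVC, Cx.
    + exists (fun z : subspace S A => f (proj1_sig z)); repeat split; auto.
      * apply continuous_R_comp; auto; apply continuous_proj.
      * intros y Cy; apply Hf1; intros Vy; apply HVC in Vy; auto.
      * apply Hf01.
      * apply Hf01.
Qed.

Lemma homeomorphism_perfect {S T : space} (f : S -> T) (g : T -> S) :
  continuous f -> continuous g ->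
  (forall x, g (f x) = x) -> (forall y, f (g y) = y) -> perfect f.
Proof.
  intros Hf Hg Hgf Hfg; split; [exact Hf | repeat split].
  - intros C HC.
    apply (open_ext (fun y => complement C (g y))); [apply Hg; exact HC|].
    intros y; unfold complement, image; split.
    + intros H [x [Cx <-]]; rewrite Hgf in H; auto.
    + intros H Cg; apply H; exists (g y); auto.
  - intros y; exists (g y); auto.
  - intros y F _ Hcov.
    destruct (Hcov (exist _ (g y) (Hfg y))) as [U [FU HU]].
    exists (U :: nil); split; [intros V [<-|[]]; auto|].
    intros z; exists U; split; [left; auto|].
    replace z with (exist (fun x => f x = y) (g y) (Hfg y)); auto.
    apply sig_eq; destruct z as [z <-]; simpl; auto.
Qed.

Definition flatten_set {S : space} (A : set S) (B : set (subspace S A)) : set S :=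
  fun s => A s /\ forall h : A s, B (exist _ s h).

Section Flatten.
Variables (S : space) (A : set S) (B : set (subspace S A)).

Definition flatten (z : subspace (subspace S A) B) : subspace S (flatten_set A B).
Proof.
  destruct z as [[s ha] hb]; exists s; split; [exact ha|].
  intros h; replace h with ha by apply proof_irrelevance; exact hb.
Defined.

Definition unflatten (z : subspace S (flatten_set A B)) : subspace (subspace S A) B :=
  exist _ (exist _ (proj1_sig z) (proj1 (proj2_sig z))) (proj2 (proj2_sig z) _).

Lemma flatten_val z : proj1_sig (flatten z) = proj1_sig (proj1_sig z).
Proof. destruct z as [[s ha] hb]; reflexivity. Qed.

Lemma flatten_continuous : continuous flatten.
Proof.
  apply continuous_into_subspace.
  replace (fun x => proj1_sig (flatten x))
    with (fun x : subspace (subspace S A) B => proj1_sig (proj1_sig x))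
    by (apply functional_extensionality; intros; rewrite flatten_val; auto).
  apply (continuous_comp (fun x : subspace (subspace S A) B => proj1_sig x)
                         (fun y : subspace S A => proj1_sig y)); apply continuous_proj.
Qed.

Lemma unflatten_continuous : continuous unflatten.
Proof. do 2 apply continuous_into_subspace; apply continuous_proj. Qed.

Lemma unflattenK z : unflatten (flatten z) = z.
Proof. do 2 apply sig_eq; apply flatten_val. Qed.

Lemma flattenK z : flatten (unflatten z) = z.
Proof. apply sig_eq; rewrite flatten_val; reflexivity. Qed.
End Flatten.

Section PropertyInvariance.
Variable P : property.
Hypothesis HP : compactness_like P.

Lemma P_homeomorphic (S T : space) (f : S -> T) (g : T -> S) :
  tychonoff S -> tychonoff T -> continuous f -> continuous g ->
  (forall x, g (f x) = x) -> (forall y, f (g y) = y) -> P S -> P T.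
Proof.
  intros HS HT Hf Hg Hgf Hfg; destruct HP as [_ [_ [Hinv _]]].
  apply (Hinv S T f HS HT), (homeomorphism_perfect f g); auto.
Qed.

Lemma P_flatten (S : space) (A : set S) (B : set (subspace S A)) :
  tychonoff S -> P (subspace (subspace S A) B) <-> P (subspace S (flatten_set A B)).
Proof.
  intros HS; assert (HA : tychonoff (subspace S A)) by (apply subspace_tychonoff; auto).
  split; [apply (P_homeomorphic _ _ (flatten S A B) (unflatten S A B))
        | apply (P_homeomorphic _ _ (unflatten S A B) (flatten S A B))];
    auto using subspace_tychonoff, flatten_continuous, unflatten_continuous,
      flattenK, unflattenK.
Qed.

Lemma P_subspace_ext (S : space) (A B : set S) :
  (forall x, A x <-> B x) -> P (subspace S A) -> P (subspace S B).
Proof. intros H; rewrite (set_ext A B H); auto. Qed.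

Lemma P_of_full_subspace (S : space) (A : set S) :
  tychonoff S -> (forall x, A x) -> P (subspace S A) -> P S.
Proof.
  intros HS HA; apply (P_homeomorphic _ _ (fun z : subspace S A => proj1_sig z)
                                      (fun x => exist _ x (HA x)));
    auto using subspace_tychonoff, continuous_proj.
  - apply continuous_into_subspace; intros U HU; exact HU.
  - intros z; apply sig_eq; reflexivity.
Qed.
End PropertyInvariance.

Section FiniteSum.
Variables (S : space) (n : nat) (D : nat -> set S).

Definition sum_point := {p : S * nat | (snd p < n)%nat /\ D (snd p) (fst p)}.
Definition sum_val (q : sum_point) : S := fst (proj1_sig q).
Definition sum_index (q : sum_point) : nat := snd (proj1_sig q).

Definition sum_open (U : set sum_point) : Prop :=
  forall p, U p -> exists V : set S, open V /\ V (sum_val p) /\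
    forall p', sum_index p' = sum_index p -> V (sum_val p') -> U p'.

Lemma sum_open_setT : sum_open (fun _ => True).
Proof. intros p _; exists (fun _ => True); split; [apply open_setT | auto]. Qed.

Lemma sum_open_setI U V : sum_open U -> sum_open V -> sum_open (fun x => U x /\ V x).
Proof.
  intros HU HV p [Up Vp].
  destruct (HU p Up) as [U' [HU' [U'p HU'']]], (HV p Vp) as [V' [HV' [V'p HV'']]].
  exists (fun x => U' x /\ V' x); split; [apply open_setI; auto|].
  split; [auto|]; intros p' E [H1 H2]; split; auto.
Qed.

Lemma sum_open_bigU (F : set (set sum_point)) :
  (forall U, F U -> sum_open U) -> sum_open (fun x => exists U, F U /\ U x).
Proof.
  intros HF p [U [FU Up]]; destruct (HF U FU p Up) as [V [HV [Vp HVU]]].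
  exists V; repeat split; auto; intros p' E Vp'; exists U; auto.
Qed.

(* The disjoint sum of the subspaces [D k], [k < n]. *)
Definition sum_space : space :=
  Space sum_point sum_open sum_open_setT sum_open_setI sum_open_bigU.

Definition sum_piece (k : nat) : set sum_space := fun q => sum_index q = k.

Lemma sum_val_continuous : continuous (sum_val : sum_space -> S).
Proof. intros V HV p Vp; exists V; auto. Qed.

Lemma sum_piece_open k : open (sum_piece k).
Proof.
  intros p Hp; exists (fun _ => True); repeat split; [apply open_setT|].
  intros p' E _; unfold sum_piece in *; congruence.
Qed.

Lemma sum_piece_closed k : closed (sum_piece k).
Proof.
  intros p Hp; exists (fun _ => True); repeat split; [apply open_setT|].
  intros p' E _; unfold sum_piece, complement in *; congruence.
Qed.

Lemma sum_point_eq (q q' : sum_point) : sum_val q = sum_val q' -> sum_index q = sum_index q' -> q = q'.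
Proof.
  intros H1 H2; apply sig_eq; unfold sum_val, sum_index in *.
  destruct (proj1_sig q), (proj1_sig q'); simpl in *; congruence.
Qed.

Lemma sum_space_tychonoff : tychonoff S -> tychonoff sum_space.
Proof.
  intros [HH HCR]; split.
  - intros p p' Hpp'.
    destruct (Nat.eq_dec (sum_index p) (sum_index p')) as [E|E].
    + assert (Hne : sum_val p <> sum_val p') by (intros E'; apply Hpp', sum_point_eq; auto).
      destruct (HH _ _ Hne) as [U [V [HU [HV [Ux [Vy HUV]]]]]].
      exists (fun q : sum_space => U (sum_val q)), (fun q : sum_space => V (sum_val q)).
      repeat split; auto; apply sum_val_continuous; auto.
    + exists (sum_piece (sum_index p)), (sum_piece (sum_index p')).
      repeat split; auto using sum_piece_open.
      unfold sum_piece; intros z [E1 E2]; congruence.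
  - intros C p HC Cp.
    destruct (HC p Cp) as [V [HV [Vp HVC]]].
    destruct (HCR (complement V) (sum_val p)) as [f [Hf [Hfx [Hf1 Hf01]]]].
    + apply closed_complement; auto.
    + intros N; apply N; auto.
    + set (k := sum_index p).
      exists (fun q : sum_space => if Nat.eq_dec (sum_index q) k then f (sum_val q) else 1).
      split; [|split; [|split]].
      * intros U HU q Uq; destruct (Nat.eq_dec (sum_index q) k) as [E|E].
        -- exists (fun s => U (f s)); repeat split; [apply Hf; auto | auto |].
           intros p' E' Hp'; destruct (Nat.eq_dec (sum_index p') k); [auto | congruence].
        -- exists (fun _ => True); repeat split; [apply open_setT|].
           intros p' E' _; destruct (Nat.eq_dec (sum_index p') k); [congruence | auto].
      * simpl; destruct (Nat.eq_dec (sum_index p) k) as [_|Hne]; [auto | now elim Hne].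
      * intros q Cq; destruct (Nat.eq_dec (sum_index q) k) as [E|E]; [|auto].
        apply Hf1; intros Vq; apply (HVC q E Vq Cq).
      * intros q; destruct (Nat.eq_dec (sum_index q) k); [apply Hf01 | lra].
Qed.

Section Piece.
Variables (k : nat) (Hk : (k < n)%nat).

Definition piece_to_D (z : subspace sum_space (sum_piece k)) : subspace S (D k).
Proof.
  exists (sum_val (proj1_sig z)); destruct z as [[[s j] [h1 h2]] hz].
  unfold sum_piece, sum_index in hz; simpl in hz; subst j; exact h2.
Defined.

Definition D_to_sum (z : subspace S (D k)) : sum_space :=
  exist _ (proj1_sig z, k) (conj Hk (proj2_sig z)).

Definition D_to_piece (z : subspace S (D k)) : subspace sum_space (sum_piece k) :=
  exist _ (D_to_sum z) eq_refl.

Lemma D_to_sum_continuous : continuous D_to_sum.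
Proof.
  intros U HU.
  exists (fun s => exists V, (open V /\ forall s' (h : D k s'), V s' -> U (D_to_sum (exist _ s' h)))
                             /\ V s).
  split; [apply open_bigU; intros V [HV _]; auto|].
  intros [s h]; split.
  - intros Uz; destruct (HU _ Uz) as [V [HV [Vs HVU]]].
    exists V; repeat split; auto; intros s' h' Vs'; apply HVU; auto.
  - intros [V [[HV HVU] Vs]]; apply HVU; auto.
Qed.

Lemma piece_to_D_continuous : continuous piece_to_D.
Proof.
  apply continuous_into_subspace; simpl.
  apply (continuous_comp (fun z : subspace sum_space (sum_piece k) => proj1_sig z) sum_val);
    [apply continuous_proj | apply sum_val_continuous].
Qed.

Lemma D_to_piece_continuous : continuous D_to_piece.
Proof. apply continuous_into_subspace, D_to_sum_continuous. Qed.

Lemma D_to_pieceK z : piece_to_D (D_to_piece z) = z.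
Proof. apply sig_eq; reflexivity. Qed.

Lemma piece_to_DK z : D_to_piece (piece_to_D z) = z.
Proof.
  apply sig_eq, sum_point_eq; [reflexivity|].
  destruct z as [q hq]; unfold sum_piece in hq; simpl; symmetry; exact hq.
Qed.
End Piece.

Lemma finite_intersection_nbhd (s : S) (G : nat -> set S -> Prop) :
  (forall k V V', (forall x, V' x -> V x) -> G k V -> G k V') ->
  forall m, (forall k, (k < m)%nat -> exists V, open V /\ V s /\ G k V) ->
  exists V, open V /\ V s /\ forall k, (k < m)%nat -> G k V.
Proof.
  intros Gmon m; induction m as [|m IH]; intros H.
  - exists (fun _ => True); repeat split; [apply open_setT|]; intros k Hk; lia.
  - destruct IH as [V [HV [Vs HVG]]]; [intros k Hk; apply H; lia|].
    destruct (H m) as [V' [HV' [V's HV'G]]]; [lia|].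
    exists (fun x => V x /\ V' x); repeat split; auto; [apply open_setI; auto|].
    intros k Hk; destruct (Nat.eq_dec k m) as [->|E].
    + apply (Gmon m V'); [tauto | auto].
    + apply (Gmon k V); [tauto|]; apply HVG; lia.
Qed.

Lemma sum_val_closed_map :
  (forall k, (k < n)%nat -> closed (D k)) ->
  forall C : set sum_space, closed C -> closed (image sum_val C).
Proof.
  intros HDc C HC; apply open_of_neighbourhoods; intros s Hs.
  destruct (finite_intersection_nbhd s
    (fun k V => forall s', V s' -> forall h : (k < n)%nat /\ D k s', ~ C (exist _ (s', k) h)))
    with (m := n) as [V [HV [Vs HVG]]].
  - intros k V V' HVV' HG s' V's h; apply HG; auto.
  - intros k Hk; destruct (classic (D k s)) as [Ds|Ds].
    + set (q := (exist _ (s, k) (conj Hk Ds) : sum_space)).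
      assert (Cq : complement C q) by (intros Cq; apply Hs; exists q; auto).
      destruct (HC q Cq) as [V [HV [Vq HVC]]].
      exists V; repeat split; auto.
      intros s' Vs' h; apply (HVC (exist _ (s', k) h)); auto.
    + exists (complement (D k)); repeat split; [apply HDc, Hk | exact Ds |].
      intros s' Ds' h; elim Ds'; apply h.
  - exists V; repeat split; auto.
    intros s' Vs' [[[a b] h] [Cq <-]].
    apply (HVG b (proj1 h) a Vs' h Cq).
Qed.

(* Each fibre of [sum_val] has at most [n] points, one in each piece. *)
Lemma sum_val_fibre_compact (s : S) : compact (subspace sum_space (fun q => sum_val q = s)).
Proof.
  intros F HF Hcover.
  assert (Hm : forall m, exists l, (forall U, In U l -> F U) /\
             forall z, (sum_index (proj1_sig z) < m)%nat -> exists U, In U l /\ U z).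
  { induction m as [|m [l [Hl1 Hl2]]].
    - exists nil; split; [intros U []|]; intros z Hz; lia.
    - destruct (classic (exists z : subspace sum_space (fun q => sum_val q = s),
                           sum_index (proj1_sig z) = m)) as [[z0 Hz0]|Hno].
      + destruct (Hcover z0) as [U [FU Uz0]].
        exists (U :: l); split; [intros V [<-|HV]; auto|].
        intros z Hz; destruct (Nat.eq_dec (sum_index (proj1_sig z)) m) as [E|E].
        * exists U; split; [left; auto|].
          replace z with z0; auto.
          apply sig_eq, sum_point_eq; [|transitivity m; auto].
          transitivity s; [exact (proj2_sig z0) | symmetry; exact (proj2_sig z)].
        * destruct (Hl2 z) as [V [HV Vz]]; [lia|]; exists V; split; [right|]; auto.
      + exists l; split; auto; intros z Hz.
        destruct (Nat.eq_dec (sum_index (proj1_sig z)) m) as [E|E].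
        * elim Hno; exists z; auto.
        * apply Hl2; lia. }
  destruct (Hm n) as [l [Hl1 Hl2]]; exists l; split; auto.
  intros z; apply Hl2; destruct z as [[[a b] [h1 h2]] hz]; exact h1.
Qed.

Lemma sum_val_perfect :
  (forall k, (k < n)%nat -> closed (D k)) ->
  (forall s, exists k, (k < n)%nat /\ D k s) ->
  perfect (sum_val : sum_space -> S).
Proof.
  intros HDc Hcov; repeat split.
  - apply sum_val_continuous.
  - apply sum_val_closed_map; auto.
  - intros s; destruct (Hcov s) as [k [Hk Ds]].
    exists (exist _ (s, k) (conj Hk Ds)); reflexivity.
  - apply sum_val_fibre_compact.
Qed.
End FiniteSum.

Section FiniteUnions.
Variable P : property.
Hypothesis HP : compactness_like P.

Lemma P_sum_space (S : space) (n : nat) (D : nat -> set S) :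
  tychonoff S -> (forall k, (k < n)%nat -> P (subspace S (D k))) -> P (sum_space S n D).
Proof.
  intros HS HD; destruct HP as [_ [Hadd _]].
  apply (Hadd _ n (sum_piece S n D)); auto using sum_space_tychonoff.
  - intros k Hk; split; [apply sum_piece_closed|].
    apply (P_homeomorphic P HP _ _ (D_to_piece S n D k Hk) (piece_to_D S n D k));
      auto using subspace_tychonoff, sum_space_tychonoff, D_to_piece_continuous,
        piece_to_D_continuous, D_to_pieceK, piece_to_DK.
  - intros k l x _ _ E H1 H2; unfold sum_piece in *; congruence.
  - intros [[s k] [h1 h2]]; exists k; split; auto; reflexivity.
Qed.

(* The projection of the disjoint sum of the pieces onto [S] is perfect. *)
Lemma P_of_finite_closed_cover (S : space) (n : nat) (D : nat -> set S) :
  tychonoff S ->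
  (forall k, (k < n)%nat -> closed (D k) /\ P (subspace S (D k))) ->
  (forall s, exists k, (k < n)%nat /\ D k s) -> P S.
Proof.
  intros HS HD Hcov; destruct HP as [_ [_ [Hinv _]]].
  apply (Hinv (sum_space S n D) S (sum_val S n D));
    auto using sum_space_tychonoff.
  - apply sum_val_perfect; auto; apply HD.
  - apply P_sum_space; auto; apply HD.
Qed.

(* [S] is the union of the closed pieces [S] and [A]; in the sum, the copy of [A] is clopen. *)
Lemma P_closed_subspace (S : space) (A : set S) :
  tychonoff S -> closed A -> P S -> P (subspace S A).
Proof.
  intros HS HA HPS; destruct HP as [Hclop [_ [_ [Hpinv _]]]].
  set (D := fun k => match k with 1%nat => A | _ => fun _ : S => True end).
  assert (HT : tychonoff (sum_space S 2 D)) by (apply sum_space_tychonoff; auto).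
  assert (HPT : P (sum_space S 2 D)).
  { apply (Hpinv (sum_space S 2 D) S (sum_val S 2 D)); auto.
    apply sum_val_perfect.
    - intros [|[|k]] Hk; simpl; auto using closed_setT; lia.
    - intros s; exists 0%nat; simpl; split; auto. }
  apply (P_homeomorphic P HP _ _ (piece_to_D S 2 D 1) (D_to_piece S 2 D 1 ltac:(lia)));
    auto using subspace_tychonoff, piece_to_D_continuous, D_to_piece_continuous,
      D_to_pieceK, piece_to_DK.
  apply Hclop; auto using sum_piece_open, sum_piece_closed.
Qed.

Lemma P_closed_intersection (S : space) (A C : set S) :
  tychonoff S -> closed A -> P (subspace S C) ->
  P (subspace (subspace S A) (fun z => C (proj1_sig z))).
Proof.
  intros HS HA HC.
  assert (HCA : P (subspace (subspace S C) (fun z => A (proj1_sig z)))).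
  { apply P_closed_subspace; auto using subspace_tychonoff, closed_trace. }
  apply (P_flatten P HP S A _ HS); apply (P_flatten P HP S C _ HS) in HCA.
  revert HCA; apply P_subspace_ext; intros x; unfold flatten_set; simpl; firstorder.
Qed.
End FiniteUnions.

Lemma compact_indexed_subcover (S : space) {I : Type} (F : I -> set S) :
  compact S -> (forall w, open (F w)) -> (forall x, exists w, F w x) ->
  exists l : list I, forall x, exists w, In w l /\ F w x.
Proof.
  intros HS HF Hcov.
  destruct (HS (fun U => exists w, U = F w)) as [l [Hl1 Hl2]].
  - intros U [w ->]; apply HF.
  - intros x; destruct (Hcov x) as [w Hw]; exists (F w); eauto.
  - assert (Hidx : forall l : list (set S), (forall U, In U l -> exists w, U = F w) ->
              exists lw, forall U, In U l -> exists w, In w lw /\ U = F w).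
    { induction l0 as [|U l0 IH]; intros Hl; [exists nil; intros U []|].
      destruct IH as [lw Hlw]; [intros V HV; apply Hl; right; auto|].
      destruct (Hl U (or_introl eq_refl)) as [w Hw].
      exists (w :: lw); intros V [<-|HV].
      - exists w; split; [left|]; auto.
      - destruct (Hlw V HV) as [w' [Hw' E]]; exists w'; split; [right|]; auto. }
    destruct (Hidx l Hl1) as [lw Hlw]; exists lw; intros x.
    destruct (Hl2 x) as [U [HU Ux]]; destruct (Hlw U HU) as [w [Hw ->]]; eauto.
Qed.

Lemma compact_closed_indexed_subcover (S : space) (A : set S) {I : Type}
  (G : I -> Prop) (F : I -> set S) :
  compact S -> closed A -> (forall w, G w -> open (F w)) ->
  (forall x, A x -> exists w, G w /\ F w x) ->
  exists l : list I, (forall w, In w l -> G w) /\ forall x, A x -> exists w, In w l /\ F w x.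
Proof.
  intros HS HA HF Hcov.
  set (F' := fun o : option {w | G w} =>
               match o with Some w => F (proj1_sig w) | None => complement A end).
  set (keep := fun o : option {w | G w} =>
                 match o with Some w => proj1_sig w :: nil | None => nil end).
  destruct (compact_indexed_subcover S F' HS) as [l Hl].
  - intros [[w Gw]|]; [apply HF, Gw | exact HA].
  - intros x; destruct (classic (A x)) as [Ax|nAx].
    + destruct (Hcov x Ax) as [w [Gw Fw]]; exists (Some (exist _ w Gw)); exact Fw.
    + exists None; exact nAx.
  - exists (flat_map keep l); split.
    + intros w Hw; apply in_flat_map in Hw as [[[w' Gw']|] [_ Hw]]; simpl in Hw;
        [destruct Hw as [<-|[]]; exact Gw' | contradiction].
    + intros x Ax; destruct (Hl x) as [[[w Gw]|] [Hin Fx]]; [|contradiction].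
      exists w; split; auto; apply in_flat_map; exists (Some (exist _ w Gw)); simpl; auto.
Qed.

Lemma compact_subspace_indexed_subcover (S : space) (K : set S) {I : Type}
  (G : I -> Prop) (F : I -> set S) :
  compact (subspace S K) -> (forall w, G w -> open (F w)) ->
  (forall x, K x -> exists w, G w /\ F w x) ->
  exists l : list I, (forall w, In w l -> G w) /\ forall x, K x -> exists w, In w l /\ F w x.
Proof.
  intros HK HF Hcov.
  destruct (compact_indexed_subcover (subspace S K)
              (fun (w : {w | G w}) (z : subspace S K) => F (proj1_sig w) (proj1_sig z)) HK)
    as [l Hl].
  - intros [w Gw]; apply (continuous_proj K), HF, Gw.
  - intros [x Kx]; destruct (Hcov x Kx) as [w [Gw Fw]]; exists (exist _ w Gw); exact Fw.
  - exists (map (@proj1_sig _ _) l); split.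
    + intros w Hw; apply in_map_iff in Hw as [[w' Gw'] [<- _]]; exact Gw'.
    + intros x Kx; destruct (Hl (exist _ x Kx)) as [w [Hw Fw]].
      exists (proj1_sig w); split; auto; apply in_map, Hw.
Qed.

Lemma closed_singleton (S : space) (x : S) : hausdorff S -> closed (fun y => y = x).
Proof.
  intros HH; apply open_of_neighbourhoods; intros y Hy.
  destruct (HH y x Hy) as [U [V [HU [HV [Uy [Vx HUV]]]]]].
  exists U; repeat split; auto; intros z Uz ->; apply (HUV x); auto.
Qed.

Lemma separate_point_compact_image (S T : space) (K : set S) (h : S -> T) (t : T) :
  hausdorff T -> compact (subspace S K) -> continuous h ->
  (forall k, K k -> h k <> t) ->
  exists U V, open U /\ open V /\ U t /\ (forall z, ~ (U z /\ V z)) /\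
    forall k, K k -> V (h k).
Proof.
  intros HT HK Hh Hne.
  set (G := fun UV : set T * set T => open (fst UV) /\ open (snd UV) /\ fst UV t /\
                                    forall z, ~ (fst UV z /\ snd UV z)).
  destruct (compact_subspace_indexed_subcover S K G (fun UV s => snd UV (h s)) HK)
    as [l [Hl1 Hl2]].
  - intros UV [_ [HV _]]; apply Hh, HV.
  - intros k Kk; destruct (HT t (h k)) as [U [V [HU [HV [Ut [Vh HUV]]]]]].
    { intros E; apply (Hne k Kk); auto. }
    exists (U, V); repeat split; auto.
  - assert (Hcomb : forall l, (forall UV, In UV l -> G UV) ->
              exists U V, open U /\ open V /\ U t /\ (forall z, ~ (U z /\ V z)) /\
                forall UV z, In UV l -> snd UV z -> V z).
    { induction l0 as [|[U' V'] l0 IH]; intros Hl.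
      - exists (fun _ => True), (fun _ => False);
          repeat split; auto using open_setT, open_set0; try (intros z [_ []]);
          intros UV z [].
      - destruct IH as [U [V [HU [HV [Ut [HUV HVl]]]]]]; [intros UV HUV; apply Hl; right; auto|].
        destruct (Hl (U', V') (or_introl eq_refl)) as [HU' [HV' [U't HUV']]]; simpl in *.
        exists (fun x => U x /\ U' x), (fun x => V x \/ V' x);
          repeat split; auto using open_setI, open_setU.
        + intros z [[Uz U'z] [Vz|V'z]]; [apply (HUV z) | apply (HUV' z)]; auto.
        + intros UV z [<-|HUVl] Hz; [right | left; apply (HVl UV)]; auto. }
    destruct (Hcomb l Hl1) as [U [V [HU [HV [Ut [HUV HVl]]]]]].
    exists U, V; repeat split; auto.
    intros k Kk; destruct (Hl2 k Kk) as [UV [HUVl Hk]]; apply (HVl UV); auto.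
Qed.

Lemma compact_subspace_closed (S : space) (K : set S) :
  hausdorff S -> compact (subspace S K) -> closed K.
Proof.
  intros HH HK; apply open_of_neighbourhoods; intros y Hy.
  destruct (separate_point_compact_image S S K (fun x => x) y HH HK)
    as [U [V [HU [HV [Uy [HUV HVK]]]]]].
  - intros U HU; exact HU.
  - intros k Kk ->; auto.
  - exists U; repeat split; auto; intros z Uz Kz; apply (HUV z); auto.
Qed.

Lemma urysohn_compact_closed (S : space) (K E : set S) :
  completely_regular S -> compact (subspace S K) -> closed E ->
  (forall x, K x -> ~ E x) ->
  exists g : S -> R, continuous_R g /\ (forall x, K x -> g x = 0) /\
    (forall x, E x -> g x = 1) /\ (forall x, 0 <= g x <= 1).
Proof.
  intros HCR HK HE Hdis.
  set (G := fun f : S -> R => continuous_R f /\ (forall y, E y -> f y = 1) /\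
                            forall y, 0 <= f y <= 1).
  destruct (compact_subspace_indexed_subcover S K G (fun f y => f y < 1/2) HK)
    as [l [Hl1 Hl2]].
  - intros f [Hf _]; apply open_preimage_lt, Hf.
  - intros x Kx; destruct (HCR E x HE (Hdis x Kx)) as [f [Hf [Hf0 [Hf1 Hf01]]]].
    exists f; split; [split; auto | lra].
  - assert (Hmin : forall l, (forall f, In f l -> G f) ->
              exists g0, G g0 /\ forall f y, In f l -> f y < 1/2 -> g0 y < 1/2).
    { induction l0 as [|f l0 IH]; intros Hl.
      - exists (fun _ => 1); repeat split; auto using continuous_R_const; try lra.
        intros f y [].
      - destruct IH as [g0 [[Hg0 [Hg0E Hg001]] Hg0l]]; [intros f' Hf'; apply Hl; right; auto|].
        destruct (Hl f (or_introl eq_refl)) as [Hf [HfE Hf01]].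
        exists (fun y => Rmin (f y) (g0 y)); repeat split.
        + apply continuous_R_min; auto.
        + intros y Ey; rewrite HfE, Hg0E; auto; apply Rmin_left; lra.
        + specialize (Hf01 y); specialize (Hg001 y); unfold Rmin; destruct Rle_dec; lra.
        + specialize (Hf01 y); specialize (Hg001 y); unfold Rmin; destruct Rle_dec; lra.
        + intros f' y [<-|Hf'] Hy.
          * unfold Rmin; destruct Rle_dec; lra.
          * specialize (Hg0l f' y Hf' Hy); unfold Rmin; destruct Rle_dec; lra. }
    destruct (Hmin l Hl1) as [g0 [[Hg0 [Hg0E Hg001]] Hg0l]].
    assert (HK0 : forall x, K x -> g0 x < 1/2).
    { intros x Kx; destruct (Hl2 x Kx) as [f [Hf Hfx]]; apply (Hg0l f); auto. }
    exists (fun y => Rmax 0 (2 * g0 y + -1)); repeat split.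
    + apply continuous_R_max; [apply continuous_R_const | apply continuous_R_affine; auto].
    + intros x Kx; specialize (HK0 x Kx); unfold Rmax; destruct Rle_dec; lra.
    + intros x Ex; rewrite Hg0E; auto; unfold Rmax; destruct Rle_dec; lra.
    + unfold Rmax; destruct Rle_dec; lra.
    + specialize (Hg001 x); unfold Rmax; destruct Rle_dec; lra.
Qed.

Lemma hausdorff_of_completely_regular (S : space) :
  completely_regular S -> (forall x : S, closed (fun y => y = x)) -> hausdorff S.
Proof.
  intros HCR HT1 x y Hxy.
  destruct (HCR (fun z => z = y) x (HT1 y)) as [f [Hf [Hfx [Hf1 _]]]]; [auto|].
  exists (fun z => f z < 1/2), (fun z => 1/2 < f z).
  repeat split; auto using open_preimage_lt, open_preimage_gt; [lra | rewrite Hf1; auto; lra|].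
  intros z; lra.
Qed.

Lemma open_subset_closure_image {S T : space} (i : S -> T) (C : set S) (W : set T) :
  dense (image i (fun _ => True)) -> open W -> (forall x, W (i x) -> C x) ->
  forall q, W q -> closure (image i C) q.
Proof.
  intros Hdense HW HWC q Wq D HD HCD; apply NNPP; intros nD.
  apply (Hdense q (complement (fun t => W t /\ complement D t))).
  - apply closed_complement, open_setI; auto.
  - intros t [x [_ <-]] [Wx nDx]; apply nDx, HCD; exists x; auto.
  - split; auto.
Qed.

Lemma cozero_gt {S : space} (g : S -> R) (c : R) :
  continuous_R g -> cozero (fun x => c < g x).
Proof.
  intros Hg; exists (fun x => Rmax 0 (1 * g x + - c)); split.
  - apply continuous_R_max; [apply continuous_R_const | apply continuous_R_affine, Hg].
  - intros x; unfold Rmax; destruct Rle_dec; split; intros; lra.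
Qed.

Section Extension.
Variables (P : property) (HP : compactness_like P)
  (Y : space) (HY : tychonoff Y) (Xs : set Y)
  (Hrem : compact (subspace Y (complement Xs)))
  (bX : space) (i : subspace Y Xs -> bX) (Hb : stone_cech (subspace Y Xs) bX i)
  (zY : space) (j : Y -> zY) (Hz : compactification Y zY j)
  (phi : bX -> zY) (Hphi : continuous phi)
  (Hext : forall x : subspace Y Xs, phi (i x) = j (proj1_sig x)).

Let X := subspace Y Xs.
Let K := complement Xs.

Lemma remainder_closed : closed K.
Proof. apply compact_subspace_closed; [apply HY | exact Hrem]. Qed.

Lemma Xs_open : open Xs.
Proof. apply open_complement, remainder_closed. Qed.

Lemma closure_in_X_closed (C : set X) (g : Y -> R) :
  continuous_R g -> (forall y, K y -> g y = 0) -> (forall x, C x -> 1/2 <= g (proj1_sig x)) ->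
  closed (flatten_set Xs (closure C)).
Proof.
  intros Hg HgK HC; apply open_of_neighbourhoods; intros y Hy.
  destruct (classic (Xs y)) as [Xy|Ky].
  - assert (Hn : ~ closure C (exist _ y Xy)).
    { intros Hc; apply Hy; split; auto; intros h.
      replace h with Xy by apply proof_irrelevance; auto. }
    destruct (closure_closed C) as [V [HV HVc]].
    exists (fun z => V z /\ Xs z); repeat split; auto using open_setI, Xs_open.
    + apply (HVc (exist _ y Xy)); auto.
    + intros z [Vz Xz] [_ Hz0]; apply (proj2 (HVc (exist _ z Xz)) Vz), Hz0.
  - exists (fun z => g z < 1/2); repeat split; auto using open_preimage_lt.
    + rewrite HgK; auto; lra.
    + intros z Hgz [Xz Hz0]; specialize (Hz0 Xz).
      assert (Hge : closed (fun x : X => 1/2 <= g (proj1_sig x))).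
      { apply closed_preimage_ge, continuous_R_comp; auto; apply continuous_proj. }
      specialize (Hz0 _ Hge HC); simpl in Hz0; lra.
Qed.

Lemma P_closure_in_X (C : set X) (g : Y -> R) :
  P Y -> continuous_R g -> (forall y, K y -> g y = 0) ->
  (forall x, C x -> 1/2 <= g (proj1_sig x)) -> P (subspace X (closure C)).
Proof.
  intros HPY Hg HgK HC; apply (P_flatten P HP Y Xs (closure C) HY).
  apply P_closed_subspace; auto; apply (closure_in_X_closed C g); auto.
Qed.

Lemma locally_P_of_P : P Y -> locally P X.
Proof.
  intros HPY x.
  destruct (urysohn_compact_closed Y K (fun y => y = proj1_sig x) (proj2 HY) Hrem)
    as [g [Hg [HgK [Hgx Hg01]]]].
  - apply closed_singleton, HY.
  - intros y Ky ->; apply Ky, (proj2_sig x).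
  - exists (fun x' : X => 1/2 < g (proj1_sig x')); repeat split.
    + apply open_preimage_gt, continuous_R_comp; auto; apply continuous_proj.
    + simpl; rewrite Hgx; auto; lra.
    + apply (P_closure_in_X _ g); auto; intros x' H; lra.
Qed.

Lemma lambda_of_phi_off_remainder (p : bX) :
  P Y -> (forall y, K y -> phi p <> j y) -> lambdaP P X bX i p.
Proof.
  intros HPY Hoff.
  destruct Hz as [_ [HzH [[_ [Hjc _]] _]]].
  destruct (separate_point_compact_image Y zY K j (phi p) HzH Hrem Hjc)
    as [U [V [HU [HV [Up [HUV HVK]]]]]].
  { intros k Kk E; apply (Hoff k Kk); auto. }
  set (E := fun y => ~ V (j y)).
  destruct (urysohn_compact_closed Y K E (proj2 HY) Hrem) as [g [Hg [HgK [HgE Hg01]]]].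
  - apply closed_complement, Hjc, HV.
  - intros y Ky Ey; apply Ey, HVK, Ky.
  - exists (fun x : X => 1/2 < g (proj1_sig x)); repeat split.
    + apply cozero_gt, continuous_R_comp; auto; apply continuous_proj.
    + apply (P_closure_in_X _ g); auto; intros x Hx; lra.
    + exists (fun q => U (phi q)); repeat split; [apply Hphi, HU | exact Up |].
      destruct Hb as [[_ [_ [_ Hidense]]] _].
      apply (open_subset_closure_image i _ (fun q => U (phi q)));
        [exact Hidense | apply Hphi, HU |].
      intros x Ux; rewrite Hext in Ux; rewrite HgE; [lra|].
      intros Vx; apply (HUV (j (proj1_sig x))); auto.
Qed.

Section Collapse.

Definition collapse (y : Y) : option X :=
  match excluded_middle_informative (Xs y) with
  | left h => Some (exist _ y h)
  | right _ => None
  end.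

Lemma collapse_in y (h : Xs y) : collapse y = Some (exist _ y h).
Proof.
  unfold collapse; destruct (excluded_middle_informative (Xs y)) as [h'|n]; [|contradiction].
  f_equal; apply sig_eq; reflexivity.
Qed.

Lemma collapse_val (x : X) : collapse (proj1_sig x) = Some x.
Proof. rewrite (collapse_in _ (proj2_sig x)); f_equal; apply sig_eq; reflexivity. Qed.

Lemma collapse_out y : K y -> collapse y = None.
Proof.
  intros n; unfold collapse; destruct (excluded_middle_informative (Xs y)); [contradiction|auto].
Qed.

Lemma collapse_None y : collapse y = None <-> K y.
Proof.
  split; [|apply collapse_out].
  intros E Xy; rewrite (collapse_in y Xy) in E; discriminate.
Qed.

Lemma collapse_inj a b : collapse a = collapse b -> Xs b -> a = b.
Proof.
  intros E hb; rewrite (collapse_in b hb) in E; destruct (classic (Xs a)) as [ha|na].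
  - rewrite (collapse_in a ha) in E; injection E; auto.
  - rewrite (collapse_out a na) in E; discriminate.
Qed.

Definition collapsed_open (U : set (option X)) : Prop := open (fun y => U (collapse y)).

Lemma collapsed_open_setT : collapsed_open (fun _ => True).
Proof. apply open_setT. Qed.

Lemma collapsed_open_setI U V :
  collapsed_open U -> collapsed_open V -> collapsed_open (fun x => U x /\ V x).
Proof. intros; apply open_setI; auto. Qed.

Lemma collapsed_open_bigU (F : set (set (option X))) :
  (forall U, F U -> collapsed_open U) -> collapsed_open (fun x => exists U, F U /\ U x).
Proof.
  intros HF.
  apply (open_ext (fun y => exists V, (exists U, F U /\ V = (fun y => U (collapse y))) /\ V y)).
  - apply open_bigU; intros V [U [FU ->]]; apply HF; auto.
  - intros y; split.
    + intros [V [[U [FU ->]] HV]]; exists U; auto.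
    + intros [U [FU HU]]; exists (fun y => U (collapse y)); split; eauto.
Qed.

(* The quotient [Y / K], with the remainder collapsed to the point [None]. *)
Definition collapsed : space :=
  Space (option X) collapsed_open collapsed_open_setT collapsed_open_setI collapsed_open_bigU.

Lemma collapse_continuous : continuous (collapse : Y -> collapsed).
Proof. intros U HU; exact HU. Qed.

Definition collapsed_fun (g : Y -> R) (c : R) (q : collapsed) : R :=
  match q with Some x => g (proj1_sig x) | None => c end.

Lemma collapsed_fun_continuous (g : Y -> R) (c : R) :
  continuous_R g -> (forall y, K y -> g y = c) -> continuous_R (collapsed_fun g c).
Proof.
  intros Hg HgK U HU; apply (open_ext (fun y => U (g y))); [apply Hg, HU|].
  intros y; destruct (classic (Xs y)) as [Xy|Ky].
  - rewrite (collapse_in y Xy); tauto.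
  - rewrite (collapse_out y Ky); simpl; rewrite (HgK y Ky); tauto.
Qed.

Lemma collapsed_closed_singleton (q0 : collapsed) : closed (fun q => q = q0).
Proof.
  unfold closed, open; simpl; unfold collapsed_open, complement.
  destruct q0 as [x|].
  - apply (open_ext (complement (fun y => y = proj1_sig x))).
    + apply closed_singleton, HY.
    + intros y; unfold complement; split; intros H E; apply H.
      * apply collapse_inj; [rewrite E, collapse_val; auto | apply (proj2_sig x)].
      * subst y; apply collapse_val.
  - apply (open_ext Xs); [apply Xs_open|].
    intros y; split.
    + intros Xy E; rewrite (collapse_in y Xy) in E; discriminate.
    + intros H; apply NNPP; intros Ky; apply H, collapse_out, Ky.
Qed.

Lemma collapsed_completely_regular : completely_regular collapsed.
Proof.
  intros C q HC Cq.
  set (C' := fun y => C (collapse y)).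
  assert (HC' : closed C') by exact HC.
  destruct q as [x|].
  - destruct (proj2 HY C' (proj1_sig x) HC') as [h1 [Hh1 [Hh1x [Hh1C Hh101]]]].
    { unfold C'; rewrite collapse_val; exact Cq. }
    destruct (urysohn_compact_closed Y K (fun y => y = proj1_sig x) (proj2 HY) Hrem)
      as [g [Hg [HgK [Hgx Hg01]]]].
    { apply closed_singleton, HY. }
    { intros y Ky ->; apply Ky, (proj2_sig x). }
    (* [h = 1] on [K] and on [C'], while [h = 0] at [x] *)
    set (h := fun y => Rmax (h1 y) (-1 * g y + 1)).
    assert (HhK : forall y, K y -> h y = 1).
    { intros y Ky; unfold h; rewrite HgK; auto; specialize (Hh101 y).
      unfold Rmax; destruct Rle_dec; lra. }
    exists (collapsed_fun h 1); split; [|split; [|split]].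
    + apply collapsed_fun_continuous; auto.
      apply continuous_R_max; auto; apply continuous_R_affine, Hg.
    + simpl; unfold h; rewrite Hh1x, Hgx; auto; unfold Rmax; destruct Rle_dec; lra.
    + intros [x'|] Cq'; simpl; auto.
      unfold h; rewrite Hh1C; [|unfold C'; rewrite collapse_val; auto].
      specialize (Hg01 (proj1_sig x')); unfold Rmax; destruct Rle_dec; lra.
    + intros [x'|]; simpl; [|lra].
      specialize (Hh101 (proj1_sig x')); specialize (Hg01 (proj1_sig x')).
      unfold h, Rmax; destruct Rle_dec; lra.
  - destruct (urysohn_compact_closed Y K C' (proj2 HY) Hrem HC')
      as [g [Hg [HgK [HgC Hg01]]]].
    { intros y Ky Cy; unfold C' in Cy; rewrite collapse_out in Cy; auto. }
    exists (collapsed_fun g 0); split; [|split; [|split]]; auto.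
    + apply collapsed_fun_continuous; auto.
    + intros [x'|] Cq'; [|contradiction].
      apply HgC; unfold C'; rewrite collapse_val; auto.
    + intros [x'|]; simpl; [apply Hg01 | lra].
Qed.

Lemma collapsed_tychonoff : tychonoff collapsed.
Proof.
  split; [apply hausdorff_of_completely_regular|]; auto using collapsed_completely_regular,
    collapsed_closed_singleton.
Qed.
End Collapse.

Lemma collapse_closed_map (C : set Y) : closed C -> closed (image collapse C : set collapsed).
Proof.
  intros HC; unfold closed, open; simpl; unfold collapsed_open.
  destruct (classic (exists c, C c /\ K c)) as [[c [Cc Kc]]|Hno].
  - apply (open_ext (fun y => Xs y /\ complement C y)); [apply open_setI; auto using Xs_open|].
    intros y; split.
    + intros [Xy nC] [c' [Cc' E]]; apply nC; rewrite <- (collapse_inj c' y E Xy); auto.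
    + intros H; split.
      * apply NNPP; intros Ky; apply H; exists c; split; auto; rewrite !collapse_out; auto.
      * intros Cy; apply H; exists y; auto.
  - apply (open_ext (complement C)); [exact HC|].
    intros y; split.
    + intros nC [c' [Cc' E]]; destruct (classic (Xs y)) as [Xy|Ky].
      * apply nC; rewrite <- (collapse_inj c' y E Xy); auto.
      * apply Hno; exists c'; split; auto; apply collapse_None; rewrite E; apply collapse_out, Ky.
    + intros H Cy; apply H; exists y; auto.
Qed.

Lemma collapse_fibre_compact (q : collapsed) : compact (subspace Y (fun y => collapse y = q)).
Proof.
  destruct q as [x|].
  - intros F HF Hcov.
    destruct (Hcov (exist _ (proj1_sig x) (collapse_val x))) as [U [FU HU]].
    exists (U :: nil); split; [intros V [<-|[]]; auto|].
    intros z; exists U; split; [left; auto|].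
    replace z with (exist (fun y => collapse y = Some x) (proj1_sig x) (collapse_val x)); auto.
    apply sig_eq; simpl; symmetry; apply collapse_inj; [|apply (proj2_sig x)].
    transitivity (Some x); [exact (proj2_sig z) | symmetry; apply collapse_val].
  - replace (fun y => collapse y = None) with K; auto.
    apply set_ext; intros y; symmetry; apply collapse_None.
Qed.

Section NonemptyRemainder.
Variables (k0 : Y) (Hk0 : K k0).

Lemma collapse_perfect : perfect (collapse : Y -> collapsed).
Proof.
  repeat split.
  - apply collapse_continuous.
  - apply collapse_closed_map.
  - intros [x|]; [exists (proj1_sig x); apply collapse_val | exists k0; apply collapse_out, Hk0].
  - apply collapse_fibre_compact.
Qed.

Definition uncollapse (q : collapsed) : Y := match q with Some x => proj1_sig x | None => k0 end.

Lemma collapseK q : q <> None -> collapse (uncollapse q) = q.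
Proof. destruct q as [x|]; intros H; [apply collapse_val | contradiction]. Qed.

Lemma uncollapseK y : Xs y -> uncollapse (collapse y) = y.
Proof. intros h; rewrite (collapse_in y h); reflexivity. Qed.

(* Away from a neighbourhood [U] of the collapsed point, [collapse] is a homeomorphism. *)
Section AwayFromRemainder.
Variables (U : set collapsed) (HU : open U) (HUn : U None).

Definition outside_U : set Y := fun y => ~ U (collapse y).

Lemma outside_U_closed : closed outside_U.
Proof.
  apply (open_ext (fun y => U (collapse y))); [exact HU|].
  intros y; unfold complement, outside_U; split; [tauto | apply NNPP].
Qed.

Lemma outside_U_in_X y : outside_U y -> Xs y.
Proof. intros H; apply NNPP; intros Ky; apply H; rewrite collapse_out; auto. Qed.

Definition collapse_outside (z : subspace Y outside_U) : subspace collapsed (complement U) :=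
  exist _ (collapse (proj1_sig z)) (proj2_sig z).

Lemma uncollapse_outside_proof (w : subspace collapsed (complement U)) :
  outside_U (uncollapse (proj1_sig w)).
Proof.
  unfold outside_U; rewrite collapseK; [apply (proj2_sig w)|].
  intros E; apply (proj2_sig w); rewrite E; auto.
Qed.

Definition uncollapse_outside (w : subspace collapsed (complement U)) : subspace Y outside_U :=
  exist _ (uncollapse (proj1_sig w)) (uncollapse_outside_proof w).

Lemma collapse_outside_continuous : continuous collapse_outside.
Proof.
  apply continuous_into_subspace; simpl.
  apply (continuous_comp (fun z : subspace Y outside_U => proj1_sig z) (collapse : Y -> collapsed));
    [apply continuous_proj | apply collapse_continuous].
Qed.

Lemma uncollapse_outside_continuous : continuous uncollapse_outside.
Proof.
  intros O [O' [HO' HOO']].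
  exists (fun q => U q \/ exists y, O' y /\ Xs y /\ collapse y = q); split.
  - apply (open_ext (fun y => U (collapse y) \/ O' y)); [apply open_setU; auto|].
    intros y; split.
    + intros [Uy|Oy]; [left; auto|].
      destruct (classic (Xs y)) as [Xy|Ky]; [right; exists y; auto | left; rewrite collapse_out; auto].
    + intros [Uy|[y' [Oy' [Xy' E]]]]; [left; auto|].
      right; rewrite (collapse_inj y' y) in Oy'; auto.
      apply NNPP; intros Ky; rewrite (collapse_out y Ky), (collapse_in y' Xy') in E; discriminate.
  - intros [[x|] hw]; rewrite HOO'; simpl; [|elim hw; auto].
    split.
    + intros Ox; right; exists (proj1_sig x); repeat split; auto; [apply (proj2_sig x) | apply collapse_val].
    + intros [Ux|[y' [Oy' [Xy' E]]]]; [contradiction|].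
      replace (proj1_sig x) with y'; auto.
      apply collapse_inj; [rewrite E, collapse_val; auto | apply (proj2_sig x)].
Qed.

Lemma uncollapse_outsideK z : uncollapse_outside (collapse_outside z) = z.
Proof. apply sig_eq, uncollapseK, outside_U_in_X, (proj2_sig z). Qed.

Lemma collapse_outsideK w : collapse_outside (uncollapse_outside w) = w.
Proof.
  apply sig_eq; destruct w as [q hq]; simpl; apply collapseK.
  intros ->; apply hq, HUn.
Qed.
End AwayFromRemainder.
End NonemptyRemainder.

Section LambdaCondition.
Hypothesis Hcov : forall p : bX, ~ lambdaP P X bX i p ->
  exists y : Y, complement Xs y /\ phi p = j y.

Lemma closure_trace_subset_lambda (A : set Y) (q : bX) :
  closed A -> (forall y, A y -> Xs y) ->
  closure (image i (fun x : X => A (proj1_sig x))) q -> lambdaP P X bX i q.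
Proof.
  intros HA HAX Hq; apply NNPP; intros nl; destruct (Hcov q nl) as [y [Ky Eq]].
  destruct Hz as [_ [_ [[_ [_ Hjemb]] _]]].
  destruct (Hjemb (complement A) HA) as [W [HW HWA]].
  apply (Hq (complement (fun t => W (phi t)))).
  - apply closed_complement, Hphi, HW.
  - intros t [x [Ax <-]] Wx; rewrite Hext in Wx; apply HWA in Wx; apply Wx, Ax.
  - rewrite Eq; apply HWA; intros Ay; apply Ky, HAX, Ay.
Qed.

(* Compactness of [bX] covers the closure of [A] by finitely many of the sets defining
   [lambdaP], so [A] is a finite union of closed subsets of [cl_X C] with [P]. *)
Lemma P_closed_subset_of_X (A : set Y) :
  closed A -> (forall y, A y -> Xs y) -> P (subspace Y A).
Proof.
  intros HA HAX.
  set (A' := fun x : X => A (proj1_sig x)).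
  destruct Hb as [[HbX [_ [Hiemb _]]] _].
  destruct (compact_closed_indexed_subcover bX (closure (image i A'))
              (fun C : set X => cozero C /\ P (subspace X (closure C)))
              (fun C => interior (closure (image i C))) HbX (closure_closed _))
    as [l [Hl1 Hl2]].
  - intros C _; apply interior_open.
  - intros q Hq.
    destruct (closure_trace_subset_lambda A q HA HAX Hq) as [C [HC [HPC Hint]]].
    exists C; auto.
  - assert (HPA' : P (subspace X A')).
    { apply (P_of_finite_closed_cover P HP _ (length l)
               (fun k (z : subspace X A') => closure (nth k l (fun _ : X => False)) (proj1_sig z)));
        [apply subspace_tychonoff, subspace_tychonoff, HY | |].
      - intros k Hk; split; [apply closed_trace, closure_closed|].
        apply (P_closed_intersection P HP);
          [apply subspace_tychonoff, HY | apply closed_trace, HA | apply Hl1, nth_In, Hk].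
      - intros [x Ax].
        destruct (Hl2 (i x)) as [C [InC HxC]]; [apply subset_closure; exists x; auto|].
        destruct (In_nth l C (fun _ => False) InC) as [k [Hk Ek]].
        subst C; exists k; split; auto.
        apply (closure_embedding i); auto; apply interior_subset, HxC. }
    apply (P_flatten P HP Y Xs A' HY) in HPA'.
    revert HPA'; apply P_subspace_ext; intros y; unfold flatten_set, A'; simpl; split.
    + intros [Xy H]; apply (H Xy).
    + intros Ay; split; auto.
Qed.

(* With [K] collapsed to a point, every closed set missing that point is (a homeomorphic
   copy of) a closed subset of [X], hence has [P]; condition (W) then gives [P] for the
   quotient, and the quotient map is perfect. *)
Lemma P_of_lambda_condition : P Y.
Proof.
  destruct HP as [_ [_ [_ [Hinv Hw]]]].
  destruct (classic (exists k0, K k0)) as [[k0 Hk0]|Hempty].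
  - apply (Hinv Y collapsed collapse HY collapsed_tychonoff (collapse_perfect k0 Hk0)).
    apply (Hw collapsed None (fun U => open U /\ U None) collapsed_tychonoff);
      [auto | intros V HV HVn; exists V; auto |].
    intros U [HU HUn].
    apply (P_homeomorphic P HP _ _ (collapse_outside U) (uncollapse_outside k0 U HUn));
      auto using subspace_tychonoff, collapsed_tychonoff, collapse_outside_continuous,
        uncollapse_outside_continuous, uncollapse_outsideK, collapse_outsideK.
    apply P_closed_subset_of_X; [apply outside_U_closed, HU | apply outside_U_in_X, HUn].
  - apply (P_of_full_subspace P HP Y (fun _ => True) HY); auto.
    apply P_closed_subset_of_X; [apply closed_setT|].
    intros y _; apply NNPP; intros Ky; apply Hempty; exists y; exact Ky.
Qed.
End LambdaCondition.
End Extension.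

Theorem lemma4p7 (P : property) (HP : compactness_like P)
  (Y : space) (HY : tychonoff Y) (Xs : set Y)
  (Hdense : dense Xs) (Hrem : compact (subspace Y (complement Xs)))
  (bX : space) (i : subspace Y Xs -> bX) (Hb : stone_cech (subspace Y Xs) bX i)
  (zY : space) (j : Y -> zY) (Hz : compactification Y zY j)
  (phi : bX -> zY) (Hphi : continuous phi)
  (Hext : forall x : subspace Y Xs, phi (i x) = j (proj1_sig x)) :
  in_EP P Y Xs <->
  (locally P (subspace Y Xs) /\
   forall p : bX, ~ lambdaP P (subspace Y Xs) bX i p ->
     exists y : Y, complement Xs y /\ phi p = j y).
Proof.
  split.
  - intros [_ [HPY _]]; split.
    + apply (locally_P_of_P P HP Y HY Xs Hrem HPY).
    + intros p Hp; apply NNPP; intros Hoff; apply Hp.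
      apply (lambda_of_phi_off_remainder P HP Y HY Xs Hrem bX i Hb zY j Hz phi Hphi Hext p HPY).
      intros y Ky E; apply Hoff; exists y; auto.
  - intros [_ Hcov]; repeat split; auto.
    apply (P_of_lambda_condition P HP Y HY Xs Hrem bX i Hb zY j Hz phi Hphi Hext Hcov).
Qed.
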